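(* Let $\Gamma>0$ and $B\in\mathbb{R}$. For $N\in\mathbb{N}_+$ let \[ H_N^{\mathrm{CW}}=-\frac{\Gamma}{2N}\sum_{x,y=1}^{N}\sigma_3(x)\sigma_3(y)-B\sum_{x=1}^{N}\sigma_1(x) \] acting on $\bigotimes_{i=1}^N\mathbb{C}^2$ (a $2^N\times2^N$ real symmetric matrix), and let $\bar H_N^{\mathrm{CW}}=H_N^{\mathrm{CW}}/N$. Then $\{\bar H_N^{\mathrm{CW}}\}_N$ is a zero-distributed GLT sequence; in particular, for every continuous compactly supported $F:\mathbb{R}\to\mathbb{C}$, \[ \lim_{N\to\infty}\frac{1}{2^N}\sum_{j=1}^{2^N}F\big(\lambda_j(\bar H_N^{\mathrm{CW}})\big)=F(0), \] and the same holds with singular values in place of eigenvalues.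
   Context: Pauli matrices: $\sigma_1=\begin{pmatrix}0&1\\1&0\end{pmatrix}$, $\sigma_3=\begin{pmatrix}1&0\\0&-1\end{pmatrix}$. $\sigma_i(x)$ denotes the operator on $\bigotimes_{k=1}^N\mathbb{C}^2$ acting as $\sigma_i$ on the $x$-th tensor factor and as the $2\times2$ identity on the others. A matrix-sequence $\{A_N\}_N$ (with $A_N$ of size $d_N\to\infty$) is zero-distributed if $\lim_{N}\frac{1}{d_N}\sum_jF(\sigma_j(A_N))=F(0)$ for all $F\in C_c(\mathbb{R})$; zero-distributed sequences are exactly the GLT sequences with GLT symbol $0$. *)

From mathcomp Require Import all_boot all_order all_algebra.
From mathcomp Require Import all_classical all_reals all_analysis.
Set Implicit Arguments. Unset Strict Implicit. Unset Printing Implicit Defensive.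
Import Order.TTheory GRing.Theory Num.Theory.
Import numFieldNormedType.Exports.
Local Open Scope ring_scope.

Section Defs.
Variable R : realType.

(* Basis index i : 'I_(2^N) of (C^2)^{(x) N}; tensor factor x <-> bit x of i
   (bit value 0 = first basis vector e_1, bit value 1 = e_2). *)
Definition qbit (x i : nat) : bool := odd (i %/ 2 ^ x).

Definition sigma3 (N x : nat) : 'M[R]_(2 ^ N) :=
  \matrix_(i, j) (if i == j then (if qbit x i then -1 else 1) else 0).

(* sigma_1 acting on factor x: flips bit x *)
Definition sigma1 (N x : nat) : 'M[R]_(2 ^ N) :=
  \matrix_(i, j) (if [forall k : 'I_N, (qbit k i == qbit k j) == (val k != x)]
                  then 1 else 0).

Definition H_CW (Gamma B : R) (N : nat) : 'M[R]_(2 ^ N) :=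
  - (Gamma / (2 * N%:R)) *: (\sum_(x < N) \sum_(y < N) (sigma3 N x *m sigma3 N y))
  - B *: (\sum_(x < N) sigma1 N x).

Definition Hbar_CW (Gamma B : R) (N : nat) : 'M[R]_(2 ^ N) :=
  (N%:R)^-1 *: H_CW Gamma B N.

Definition is_eigenvalue_list (n : nat) (A : 'M[R]_n) (s : seq R) : Prop :=
  char_poly A = \prod_(l <- s) ('X - l%:P).

Definition is_singular_value_list (n : nat) (A : 'M[R]_n) (s : seq R) : Prop :=
  all (fun l => 0 <= l) s /\
  is_eigenvalue_list (A^T *m A) (map (fun l => l ^+ 2) s).

Definition Cc (F : R -> R) : Prop :=
  continuous F /\ exists M : R, forall x : R, M < `|x| -> F x = 0.

End Defs.

(* Hbar_N is real symmetric, so its eigenvalues l_j are real, its singular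
   values are the |l_j|, and sum_j l_j^2 = tr (Hbar_N^2) is the squared
   Frobenius norm of Hbar_N.  That norm is small: the sigma_3 part of H_N is
   diagonal with entries Gamma m_i^2 / (2N), where m_i is the magnetization of
   the basis state i and sum_i m_i^2 = N 2^N, while sum_x sigma_1(x) is a 0/1
   matrix with at most N nonzero entries per row.  Hence the mean of l_j^2 is
   O(1/N), and a Chebyshev-type bound |F l - F 0| <= e + Q_e l^2, valid for
   every bounded F continuous at 0, gives the zero-distribution. *)

From mathcomp Require Import all_boot all_order all_algebra.
From mathcomp Require Import all_classical all_reals all_analysis.
From mathcomp Require Import complex.
From mathcomp Require Import ring lra.
Import Order.TTheory GRing.Theory Num.Theory.
Import numFieldNormedType.Exports.
Local Open Scope ring_scope.
Local Open Scope classical_set_scope.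

Section SimilarToDiagonal.
Context {F K : fieldType} {f : {rmorphism F -> K}} {n : nat}.

Lemma char_poly_conj (P A : 'M[K]_n) : P \in unitmx ->
  char_poly (invmx P *m A *m P) = char_poly A.
Proof.
move=> Pu; pose Q := map_mx polyC P; pose Qi := map_mx polyC (invmx P).
have QiQ : Qi *m Q = 1%:M by rewrite -map_mxM mulVmx // map_mx1.
rewrite /char_poly.
have -> : char_poly_mx (invmx P *m A *m P) = Qi *m char_poly_mx A *m Q.
  rewrite /char_poly_mx mulmxBr mulmxBl !map_mxM -!mulmxA.
  by rewrite [in RHS]mulmxA scalar_mxC -mulmxA QiQ mulmx1.
by rewrite !det_mulmx mulrAC -det_mulmx QiQ det1 mul1r.
Qed.

Section Diagonalized.
Context {A : 'M[F]_n} {P : 'M[K]_n} {d : 'rV[F]_n}.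
Hypotheses (Pu : P \in unitmx)
  (AE : map_mx f A = invmx P *m diag_mx (map_mx f d) *m P).

Lemma char_poly_diagonalized : char_poly A = \prod_(i < n) ('X - (d 0 i)%:P).
Proof.
apply: (map_poly_inj f); rewrite map_char_poly AE char_poly_conj //.
rewrite char_poly_trig ?diag_mx_is_trig // rmorph_prod; apply: eq_bigr => i _.
by rewrite !mxE eqxx mulr1n rmorphB /= map_polyX map_polyC.
Qed.

Lemma mxtrace_diagonalized : \tr A = \sum_(i < n) d 0 i.
Proof.
apply: (fmorph_inj f); rewrite -trace_map_mx AE mxtrace_mulC mulmxA mulmxV //.
by rewrite mul1mx mxtrace_diag rmorph_sum; apply: eq_bigr => i _; rewrite mxE.
Qed.

Lemma sqr_diagonalized :
  map_mx f (A *m A) = invmx P *m diag_mx (map_mx f (\row_i d 0 i ^+ 2)) *m P.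
Proof.
rewrite map_mxM AE !mulmxA mulmxK // -[_ *m diag_mx _ *m diag_mx _]mulmxA.
rewrite mulmx_diag; congr (_ *m diag_mx _ *m _).
by apply/rowP => i; rewrite !mxE rmorphXn expr2.
Qed.

End Diagonalized.
End SimilarToDiagonal.

Section RealSymmetric.
Context {R : realType} {n : nat}.
Local Notation toC := (real_complex R).

Lemma symmx_diagonalizable {A : 'M[R]_n} : A^T = A ->
  exists2 P : 'M[R[i]]_n, P \in unitmx &
    exists d : 'rV[R]_n, map_mx toC A = invmx P *m diag_mx (map_mx toC d) *m P.
Proof.
move=> AT; set A' := map_mx toC A.
have A'herm : A' \is hermsymmx.
  apply: realsym_hermsym; last first.
    by apply/mxOverP => i j; apply/complex_realP; exists (A i j); rewrite mxE.
  apply/is_hermitianmxP; rewrite expr0 scale1r.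
  by apply/matrixP => i j; rewrite !mxE -[in LHS]AT mxE.
have /orthomx_spectralP A'E := hermitian_normalmx A'herm.
exists (spectralmx A'); first exact: spectral_unit.
exists (map_mx (@complex.Re R) (spectral_diag A')); rewrite -map_mx_comp [LHS]A'E.
congr (_ *m diag_mx _ *m _); apply/matrixP => i j /=; rewrite !mxE /= RRe_real //.
exact: (mxOverP (hermitian_spectral_diag_real A'herm)).
Qed.

Lemma eigenvalue_list_size {A : 'M[R]_n} {s : seq R} :
  is_eigenvalue_list A s -> size s = n.
Proof. by move=> hs; have := size_char_poly A; rewrite hs size_prod_XsubC => -[]. Qed.

Lemma singular_value_list_size {A : 'M[R]_n} {s : seq R} :
  is_singular_value_list A s -> size s = n.
Proof. by case=> _ /eigenvalue_list_size; rewrite size_map. Qed.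

Lemma eigenvalue_list_perm {A : 'M[R]_n} {s t : seq R} :
  is_eigenvalue_list A s -> is_eigenvalue_list A t -> perm_eq s t.
Proof. by move=> hs ht; apply: prod_XsubC_eq; rewrite -hs -ht. Qed.

Lemma symmx_spectrum {A : 'M[R]_n} : A^T = A -> exists r : seq R,
  [/\ is_eigenvalue_list A r, is_eigenvalue_list (A^T *m A) [seq l ^+ 2 | l <- r]
    & \sum_(l <- r) l ^+ 2 = \tr (A *m A)].
Proof.
move=> AT; have [P Pu [d AE]] := symmx_diagonalizable AT.
have A2E := sqr_diagonalized Pu AE.
exists [seq d 0 i | i <- enum 'I_n]; rewrite /is_eigenvalue_list -map_comp.
rewrite !big_map -enumT !big_enum /= (char_poly_diagonalized Pu AE).
rewrite AT (char_poly_diagonalized Pu A2E) (mxtrace_diagonalized Pu A2E).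
by split=> //; apply: eq_bigr => i _; rewrite mxE.
Qed.

Lemma symmx_eigenvalue_list {A : 'M[R]_n} : A^T = A ->
  exists s, is_eigenvalue_list A s.
Proof. by case/symmx_spectrum => r [hr _ _]; exists r. Qed.

Lemma symmx_singular_value_list {A : 'M[R]_n} : A^T = A ->
  exists s, is_singular_value_list A s.
Proof.
case/symmx_spectrum => r [_ hr _]; exists [seq `|l| | l <- r]; split.
  by apply/allP => _ /mapP[l _ ->].
rewrite -map_comp (eq_map (g := fun l => l ^+ 2)) // => l /=.
by rewrite real_normK ?num_real.
Qed.

Lemma symmx_eigenvalue_list_sum_sqr {A : 'M[R]_n} {s : seq R} : A^T = A ->
  is_eigenvalue_list A s -> \sum_(l <- s) l ^+ 2 = \tr (A *m A).
Proof.
move=> /symmx_spectrum[r [hr _ <-]] hs.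
by apply: perm_big; exact: eigenvalue_list_perm hs hr.
Qed.

Lemma symmx_singular_value_list_sum_sqr {A : 'M[R]_n} {s : seq R} : A^T = A ->
  is_singular_value_list A s -> \sum_(l <- s) l ^+ 2 = \tr (A *m A).
Proof.
move=> /symmx_spectrum[r [_ hr <-]] [_ hs].
rewrite -!(big_map (fun l => l ^+ 2) xpredT id).
by apply: perm_big; exact: eigenvalue_list_perm hs hr.
Qed.

End RealSymmetric.

Section SquaredFrobeniusNorm.
Context {R : realFieldType}.

Definition sqfrob {m n} (A : 'M[R]_(m, n)) : R := \sum_i \sum_j A i j ^+ 2.

Lemma sqfrobZ {m n} a (A : 'M[R]_(m, n)) : sqfrob (a *: A) = a ^+ 2 * sqfrob A.
Proof.
rewrite /sqfrob mulr_sumr; apply: eq_bigr => i _.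
by rewrite mulr_sumr; apply: eq_bigr => j _; rewrite mxE exprMn.
Qed.

Lemma sqfrobB_le {m n} (A B : 'M[R]_(m, n)) :
  sqfrob (A - B) <= 2 * (sqfrob A + sqfrob B).
Proof.
rewrite /sqfrob -big_split mulr_sumr; apply: ler_sum => i _.
rewrite -big_split mulr_sumr; apply: ler_sum => j _; rewrite !mxE.
rewrite -subr_ge0; suff -> : 2 * (A i j ^+ 2 + B i j ^+ 2) - (A i j - B i j) ^+ 2
  = (A i j + B i j) ^+ 2 by exact: sqr_ge0.
by ring.
Qed.

Lemma sqfrob_diag {n} (d : 'rV[R]_n) : sqfrob (diag_mx d) = \sum_i d 0 i ^+ 2.
Proof.
apply: eq_bigr => i _; rewrite (bigD1 i) //= big1 => [|j ji]; rewrite !mxE.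
  by rewrite eqxx mulr1n addr0.
by rewrite eq_sym (negbTE ji) mulr0n expr0n.
Qed.

Lemma mxtrace_mul_trmx {n} (A : 'M[R]_n) : \tr (A *m A^T) = sqfrob A.
Proof.
apply: eq_bigr => i _; rewrite mxE.
by apply: eq_bigr => j _; rewrite mxE expr2.
Qed.

Lemma sum_indicator_le1 (T : finType) (P : pred T) :
  {in P &, forall a b, a = b} -> \sum_(t : T) ((P t)%:R : R) <= 1.
Proof.
move=> Puniq; have -> : \sum_(t : T) ((P t)%:R : R) = #|P|%:R.
  rewrite -sum1_card natr_sum [RHS]big_mkcond.
  by apply: eq_bigr => t _; rewrite unfold_in; case: (P t).
rewrite -[X in _ <= X]/(1%:R : R) ler_nat.
apply/card_le1_eqP => a b aP bP; exact: Puniq.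
Qed.

End SquaredFrobeniusNorm.

Section Magnetization.
Variable R : realType.

Definition spin (b : bool) : R := if b then -1 else 1.

Definition magnetization (N i : nat) : R := \sum_(x < N) spin (qbit x i).

Lemma qbit0 i : qbit 0 i = odd i.
Proof. by rewrite /qbit expn0 divn1. Qed.

Lemma qbitS x i : qbit x.+1 i = qbit x i./2.
Proof. by rewrite /qbit expnS divnMA divn2. Qed.

Lemma qbit_inj N i j : (i < 2 ^ N)%N -> (j < 2 ^ N)%N ->
  (forall k, (k < N)%N -> qbit k i = qbit k j) -> i = j.
Proof.
elim: N i j => [|N IHN] i j; first by rewrite expn0 !ltnS !leqn0 => /eqP-> /eqP->.
rewrite expnS mul2n -!ltn_half_double => ilt jlt ij.
rewrite -(odd_double_half i) -(odd_double_half j) -!qbit0 ij //.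
by rewrite (IHN i./2 j./2) // => k kN; rewrite -!qbitS ij.
Qed.

Lemma magnetizationS N i :
  magnetization N.+1 i = spin (odd i) + magnetization N i./2.
Proof.
rewrite /magnetization big_ord_recl qbit0; congr (_ + _).
by apply: eq_bigr => x _; rewrite qbitS.
Qed.

Lemma sumr_nat_double (g : nat -> R) m :
  \sum_(0 <= i < m.*2) g i = \sum_(0 <= i < m) (g i.*2 + g i.*2.+1).
Proof.
elim: m => [|m IHm]; first by rewrite !big_geq.
by rewrite doubleS !big_nat_recr //= IHm addrA.
Qed.

Lemma sum_magnetization_sqr N :
  \sum_(i < 2 ^ N) magnetization N i ^+ 2 = (N * 2 ^ N)%:R.
Proof.
elim: N => [|N IHN]; first by rewrite big_ord1 /magnetization big_ord0 expr0n.
rewrite -(big_mkord xpredT (fun i => magnetization N.+1 i ^+ 2)).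
rewrite expnS mul2n sumr_nat_double.
under eq_bigr => i _ do rewrite !magnetizationS /= odd_double uphalf_double doubleK.
have spin_sqr_sum (a : R) :
    (spin false + a) ^+ 2 + (spin true + a) ^+ 2 = 2 * a ^+ 2 + 2.
  by rewrite /spin; ring.
under eq_bigr => i _ do rewrite spin_sqr_sum.
rewrite big_split /= -mulr_sumr !big_mkord IHN sumr_const card_ord.
by rewrite -mul2n mulSn natrD !natrM -[2 *+ _]mulr_natr; ring.
Qed.

Lemma magnetization_sqr_le N i : magnetization N i ^+ 2 <= N%:R ^+ 2.
Proof.
rewrite -real_normK ?num_real // lerXn2r ?nnegrE //.
rewrite -[N in _ <= N%:R]card_ord -sumr_const; apply: le_trans (ler_norm_sum _ _ _) _.
by apply: ler_sum => x _; rewrite /spin; case: qbit; rewrite ?normrN normr1.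
Qed.

Lemma sum_magnetization_pow4_le N :
  \sum_(i < 2 ^ N) magnetization N i ^+ 2 ^+ 2 <= N%:R ^+ 2 * (N * 2 ^ N)%:R.
Proof.
rewrite -sum_magnetization_sqr mulr_sumr; apply: ler_sum => i _.
by rewrite expr2 ler_wpM2r ?sqr_ge0 ?magnetization_sqr_le.
Qed.

End Magnetization.

Section CurieWeiss.
Context {R : realType}.
Implicit Types Gamma B : R.

Lemma sigma3E N x : sigma3 R N x = diag_mx (\row_i spin R (qbit x i)).
Proof.
apply/matrixP => i j; rewrite !mxE.
by case: eqP => [->|]; rewrite ?mulr1n ?mulr0n.
Qed.

Lemma sum_sigma3 N :
  \sum_(x < N) sigma3 R N x = diag_mx (\row_i magnetization R N i).
Proof.
apply/matrixP => i j; rewrite summxE !mxE -sumrMnl.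
by apply: eq_bigr => x _; rewrite sigma3E !mxE.
Qed.

Lemma sum_sigma3_mul N :
  \sum_(x < N) \sum_(y < N) (sigma3 R N x *m sigma3 R N y)
  = diag_mx (\row_i magnetization R N i ^+ 2).
Proof.
under eq_bigr do rewrite -mulmx_sumr.
rewrite -mulmx_suml sum_sigma3 mulmx_diag; congr diag_mx.
by apply/rowP => i; rewrite !mxE expr2.
Qed.

Definition bitflip (N x i j : nat) : bool :=
  [forall k : 'I_N, (qbit k i == qbit k j) == (val k != x)].

Lemma sigma1E N x (i j : 'I_(2 ^ N)) : sigma1 R N x i j = (bitflip N x i j)%:R.
Proof. by rewrite mxE /bitflip; case: ifP. Qed.

Lemma bitflipC N x i j : bitflip N x i j = bitflip N x j i.
Proof. by apply: eq_forallb => k; rewrite [qbit _ i == _]eq_sym. Qed.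

Lemma bitflip_functional N x (i j j' : 'I_(2 ^ N)) :
  bitflip N x i j -> bitflip N x i j' -> j = j'.
Proof.
move=> /forallP ij /forallP ij'; apply/val_inj/(@qbit_inj N); rewrite ?ltn_ord //.
move=> k kN; have := ij (Ordinal kN); have := ij' (Ordinal kN) => /=.
by case: (qbit k i); case: (qbit k j); case: (qbit k j'); case: (k != x).
Qed.

Lemma bitflip_site_uniq N (x y : 'I_N) i j :
  bitflip N x i j -> bitflip N y i j -> x = y.
Proof.
move=> /forallP /(_ x) + /forallP /(_ x); rewrite /= eqxx /=.
by move=> /eqP->; rewrite eq_sym eqbF_neg negbK => /eqP/val_inj.
Qed.

Lemma sigma1_sym N x : (sigma1 R N x)^T = sigma1 R N x.
Proof. by apply/matrixP => i j; rewrite mxE !sigma1E bitflipC. Qed.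

Lemma H_CW_sym Gamma B N : (H_CW Gamma B N)^T = H_CW Gamma B N.
Proof.
rewrite /H_CW sum_sigma3_mul linearB /= !linearZ /= linear_sum /= tr_diag_mx.
by under eq_bigr do rewrite sigma1_sym.
Qed.

Lemma Hbar_CW_sym Gamma B N : (Hbar_CW Gamma B N)^T = Hbar_CW Gamma B N.
Proof. by rewrite /Hbar_CW linearZ /= H_CW_sym. Qed.

Lemma sqfrob_sum_sigma1 N :
  sqfrob (\sum_(x < N) sigma1 R N x) <= (N * 2 ^ N)%:R.
Proof.
set T := \sum_(x < N) _.
have TE i j : T i j = \sum_(x < N) (bitflip N x i j)%:R.
  by rewrite summxE; apply: eq_bigr => x _; rewrite sigma1E.
have T_ge0 i j : 0 <= T i j by rewrite TE sumr_ge0.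
have T_le1 i j : T i j <= 1.
  by rewrite TE; apply: sum_indicator_le1 => x y; apply: bitflip_site_uniq.
have -> : (N * 2 ^ N)%:R = \sum_(i < 2 ^ N) \sum_(x < N) (1 : R).
  by rewrite !sumr_const !card_ord -mulrnA.
apply: ler_sum => i _.
apply: (@le_trans _ _ (\sum_j T i j)).
  by apply: ler_sum => j _; rewrite expr2 ler_piMl.
rewrite (eq_bigr _ (fun j _ => TE i j)) exchange_big /=.
by apply: ler_sum => x _; apply: sum_indicator_le1 => j j'; exact: bitflip_functional.
Qed.

Lemma sqfrob_H_CW Gamma B N : (0 < N)%N ->
  sqfrob (H_CW Gamma B N) <= (Gamma ^+ 2 / 2 + 2 * B ^+ 2) * (N * 2 ^ N)%:R.
Proof.
move=> N_gt0; have N_neq0 : N%:R != 0 :> R by rewrite pnatr_eq0 -lt0n.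
rewrite /H_CW sum_sigma3_mul; apply: le_trans (sqfrobB_le _ _) _.
rewrite !sqfrobZ sqfrob_diag sqrrN.
under eq_bigr do rewrite mxE.
have diag_le := sum_magnetization_pow4_le R N.
have flip_le := sqfrob_sum_sigma1 N.
apply: le_trans (ler_wpM2l _ (lerD (ler_wpM2l _ diag_le) (ler_wpM2l _ flip_le))) _;
  rewrite ?sqr_ge0 //.
by rewrite natrM le_eqVlt; apply/predU1l; field.
Qed.

Lemma mxtrace_sqr_Hbar_CW Gamma B N : (0 < N)%N ->
  \tr (Hbar_CW Gamma B N *m Hbar_CW Gamma B N)
  <= (Gamma ^+ 2 / 2 + 2 * B ^+ 2) * (2 ^ N)%:R / N%:R.
Proof.
move=> N_gt0; have N_gt0R : 0 < N%:R :> R by rewrite ltr0n.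
rewrite -[X in _ *m X]Hbar_CW_sym mxtrace_mul_trmx sqfrobZ.
apply: le_trans (ler_wpM2l (sqr_ge0 _) (sqfrob_H_CW Gamma B _ N_gt0)) _.
by rewrite natrM le_eqVlt; apply/predU1l; field; rewrite gt_eqF.
Qed.

End CurieWeiss.

Section ZeroDistribution.
Context {R : realType}.

Definition mean (s : seq R) (g : R -> R) : R :=
  (size s)%:R^-1 * \sum_(l <- s) g l.

Lemma mean_cst s c : (0 < size s)%N -> mean s (fun=> c) = c.
Proof.
move=> s_gt0; rewrite /mean big_const_seq count_predT iter_addr addr0.
by rewrite -[c *+ _]mulr_natr mulrCA mulVf ?mulr1 // pnatr_eq0 -lt0n.
Qed.

Lemma meanB s g h : mean s g - mean s h = mean s (fun l => g l - h l).
Proof. by rewrite /mean -mulrBr -sumrB. Qed.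

Lemma ler_mean s g h : (forall l, g l <= h l) -> mean s g <= mean s h.
Proof. by move=> gh; rewrite ler_wpM2l ?invr_ge0 //; apply: ler_sum. Qed.

Lemma norm_mean_le s g : `|mean s g| <= mean s (fun l => `|g l|).
Proof.
by rewrite /mean normrM ger0_norm ?invr_ge0 // ler_wpM2l ?invr_ge0 ?ler_norm_sum.
Qed.

Lemma mean_affine s a b g : (0 < size s)%N ->
  mean s (fun l => a + b * g l) = a + b * mean s g.
Proof.
move=> s_gt0; rewrite /mean big_split /= -mulr_sumr mulrDr.
by rewrite -/(mean s (fun=> a)) mean_cst // mulrCA.
Qed.

Lemma Cc_bounded (F : R -> R) : Cc F -> exists M, forall x, `|F x| <= M.
Proof.
case=> Fc [M FM].
have /compact_bounded/ex_strict_bound_gt0[Mb Mb_gt0 FMb] :=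
  continuous_compact (continuous_subspaceT Fc) (@segment_compact R (- M) M).
exists Mb => x; have [xM|Mx] := leP `|x| M.
  by apply/ltW/FMb; exists x => //; rewrite /= in_itv /= -ler_norml.
by rewrite FM // normr0 ltW.
Qed.

Lemma bounded_cont0_quadratic_bound {F : R -> R} {M e : R} :
  (forall x, `|F x| <= M) -> {for 0, continuous F} -> 0 < e ->
  exists Q, forall x, `|F x - F 0| <= e + Q * x ^+ 2.
Proof.
move=> FM F0 e_gt0.
have [d d_gt0 Fd] : exists2 d, 0 < d & forall x, `|x| < d -> `|F x - F 0| < e.
  move/cvgrPdist_lt: F0 => /(_ _ e_gt0) /nbhs_normP[d d_gt0 Fd].
  by exists d => // x xd; rewrite distrC; apply: Fd; rewrite /ball_ /= distrC subr0.
have M_ge0 : 0 <= M := le_trans (normr_ge0 _) (FM 0).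
have Q_ge0 : 0 <= 2 * M / d ^+ 2 by rewrite divr_ge0 ?sqr_ge0 // mulr_ge0.
(* Away from 0, |F x - F 0| <= 2 M, which is at most Q x^2 once Q d^2 = 2 M. *)
exists (2 * M / d ^+ 2) => x; have [xd|dx] := ltP `|x| d.
  by apply: le_trans (ltW (Fd x xd)) _; rewrite lerDl mulr_ge0 ?sqr_ge0.
have far : 2 * M <= 2 * M / d ^+ 2 * x ^+ 2.
  rewrite -[leLHS](@divfK _ (d ^+ 2)) ?expf_neq0 ?gt_eqF // ler_wpM2l //.
  by rewrite -(real_normK (num_real x)) !expr2 ler_pM // ltW.
have := ler_normB (F x) (F 0); have := FM x; have := FM 0; lra.
Qed.

Lemma mean_cvg_of_mean_sqr_cvg0 {s : nat -> seq R} {F : R -> R} {M : R} :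
  (forall x, `|F x| <= M) -> {for 0, continuous F} ->
  (forall N, (0 < size (s N))%N) ->
  (fun N => mean (s N) (fun l => l ^+ 2)) @ \oo --> 0 ->
  (fun N => mean (s N) F) @ \oo --> F 0.
Proof.
move=> FM F0 s_gt0 msq0; apply/cvgrPdist_lt => e e_gt0.
have e2_gt0 : 0 < e / 2 by rewrite divr_gt0.
have [Q FQ] := bounded_cont0_quadratic_bound FM F0 e2_gt0.
have : (fun N => Q * mean (s N) (fun l => l ^+ 2)) @ \oo --> 0.
  by rewrite -(mulr0 Q); apply: cvgM => //; exact: cvg_cst.
move/cvgrPdist_lt => /(_ _ e2_gt0).
apply: filterS => N; rewrite sub0r normrN /= => Qmsq_lt.
rewrite -(mean_cst _ (F 0) (s_gt0 N)) meanB.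
apply: le_lt_trans (norm_mean_le _ _) _.
apply: (@le_lt_trans _ _ (mean (s N) (fun l => e / 2 + Q * l ^+ 2))).
  by apply: ler_mean => l; rewrite distrC FQ.
rewrite mean_affine //; have := ler_norm (Q * mean (s N) (fun l => l ^+ 2)); lra.
Qed.

End ZeroDistribution.

Lemma Hbar_CW_zero_distributed (R : realType) (Gamma B : R) (s : nat -> seq R)
    (F : R -> R) :
  (forall N, (0 < N)%N -> size (s N) = (2 ^ N)%N /\
     \sum_(l <- s N) l ^+ 2 = \tr (Hbar_CW Gamma B N *m Hbar_CW Gamma B N)) ->
  Cc F -> (fun N => (2 ^ N)%:R^-1 * \sum_(l <- s N) F l) @ \oo --> F 0.
Proof.
move=> hs FCc; have [Fc _] := FCc; move/Cc_bounded: FCc => [M FM].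
set K := Gamma ^+ 2 / 2 + 2 * B ^+ 2.
have sE N : size (s N.+1) = (2 ^ N.+1)%N by case: (hs N.+1).
(* Nothing is assumed about [s 0], so drop it. *)
rewrite -cvg_shiftS /=; under eq_fun => N do rewrite -sE -/(mean _ _).
apply: (mean_cvg_of_mean_sqr_cvg0 FM (Fc 0)) => [N|]; first by rewrite sE expn_gt0.
apply: (@squeeze_cvgr _ _ _ _ (fun=> 0) (fun N => K * harmonic N)).
- apply: nearW => N; apply/andP; split.
    by rewrite mulr_ge0 ?invr_ge0 ?sumr_ge0 // => l _; apply: sqr_ge0.
  rewrite /mean sE (proj2 (hs N.+1 isT)).
  apply: le_trans (ler_wpM2l _ (mxtrace_sqr_Hbar_CW Gamma B N.+1 isT)) _.
    by rewrite invr_ge0.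
  rewrite le_eqVlt; apply/predU1l; rewrite /= /K.
  by field; rewrite addrC natr1 !pnatr_eq0 expn_eq0.
- exact: cvg_cst.
- rewrite -(mulr0 K); apply: cvgM; first exact: cvg_cst.
  exact: (@cvg_harmonic R).
Qed.

Theorem mainTheorem5 (R : realType) (Gamma B : R) (hGamma : 0 < Gamma) :
  (* eigenvalue lists and singular value lists exist for every N >= 1 *)
  (forall N : nat, (0 < N)%N ->
     (exists s : seq R, size s = (2 ^ N)%N /\ is_eigenvalue_list (Hbar_CW Gamma B N) s) /\
     (exists s : seq R, size s = (2 ^ N)%N /\ is_singular_value_list (Hbar_CW Gamma B N) s)) /\
  (* zero-distribution in the eigenvalue sense *)
  (forall (lam : nat -> seq R) (F : R -> R),
     (forall N : nat, (0 < N)%N -> is_eigenvalue_list (Hbar_CW Gamma B N) (lam N)) ->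
     Cc F ->
     (fun N : nat => (2 ^ N)%:R^-1 * \sum_(l <- lam N) F l) @ \oo --> F 0) /\
  (* zero-distribution in the singular value sense *)
  (forall (sv : nat -> seq R) (F : R -> R),
     (forall N : nat, (0 < N)%N -> is_singular_value_list (Hbar_CW Gamma B N) (sv N)) ->
     Cc F ->
     (fun N : nat => (2 ^ N)%:R^-1 * \sum_(l <- sv N) F l) @ \oo --> F 0).
Proof.
have Hsym N := Hbar_CW_sym Gamma B N.
split; [|split].
- move=> N _; split.
    have [s hs] := symmx_eigenvalue_list (Hsym N).
    by exists s; rewrite (eigenvalue_list_size hs).
  have [s hs] := symmx_singular_value_list (Hsym N).
  by exists s; rewrite (singular_value_list_size hs).
- move=> lam F hlam; apply: Hbar_CW_zero_distributed => N /hlam hN.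
  by rewrite (eigenvalue_list_size hN) (symmx_eigenvalue_list_sum_sqr (Hsym N) hN).
- move=> sv F hsv; apply: Hbar_CW_zero_distributed => N /hsv hN.
  rewrite (singular_value_list_size hN).
  by rewrite (symmx_singular_value_list_sum_sqr (Hsym N) hN).
Qed.
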